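(* Let $k\ge 2$ be an integer, let $\lambda>0$, and let $Y_{k,\lambda}$ be a random variable having the Poisson distribution of order $k$ with parameter $\lambda$. Let $\nu$ be an integer with $0\le \nu\le k$. Then $P(Y_{k,\lambda}\le \nu)=\tfrac12$ if and only if $$\frac{e^{k\lambda}}{2}=\sum_{j=0}^{\nu}\binom{\nu}{j}\frac{\lambda^j}{j!}.$$
   Context: The Poisson distribution of order $k$ with parameter $\lambda>0$ (for an integer $k\ge1$) is the distribution on $\{0,1,2,\dots\}$ with probability generating function $E[x^{Y_{k,\lambda}}]=\exp\bigl(-k\lambda\bigr)\exp\bigl(\lambda\sum_{i=1}^{k}x^i\bigr)$, i.e. the compound Poisson distribution with pgf $\exp\bigl(-\sum_i a_i\bigr)\exp\bigl(\sum_i a_i x^i\bigr)$ where $a_1=\dots=a_k=\lambda$ and all other $a_i=0$. Equivalently, its probability mass function $p_n=P(Y_{k,\lambda}=n)$ satisfies $p_0=e^{-k\lambda}$ and $p_n=e^{-k\lambda}\sum_{j=1}^{n}\binom{n-1}{j-1}\frac{\lambda^j}{j!}$ for $n=1,\dots,k$. The median is defined as the smallest integer $\nu$ with $P(Y_{k,\lambda}\le\nu)\ge\tfrac12$; the displayed equation is the equation determining the value of $\lambda$ at which $P(Y_{k,\lambda}\le\nu)=\tfrac12$. *)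

From HB Require Import structures.
From mathcomp Require Import all_boot all_order all_algebra.
From mathcomp Require Import reals sequences.
From mathcomp.analysis Require Import exp.
Set Implicit Arguments. Unset Strict Implicit. Unset Printing Implicit Defensive.
Import Order.TTheory GRing.Theory Num.Theory.
Local Open Scope ring_scope.

(* Probability mass function of the Poisson distribution of order k with
   parameter lam: the coefficient of x^n in
     exp(-k lam) exp(lam (x + x^2 + ... + x^k))
     = exp(-k lam) * prod_{i=1}^{k} sum_{m>=0} lam^m x^(i m) / m!.
   A term is indexed by the multiplicities (m_1,...,m_k) with
   sum_i i*m_i = n (each m_i <= n, so m ranges over 'I_n.+1; index i : 'I_k
   stands for the exponent i+1). *)
Definition poisk_pmf (R : realType) (k : nat) (lam : R) (n : nat) : R :=
  expR (- (k%:R * lam)) *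
  \sum_(m : {ffun 'I_k -> 'I_n.+1} | (\sum_(i < k) (i.+1 * m i))%N == n)
     \prod_(i < k) (lam ^+ m i / (m i)`!%:R).

Definition poisk_cdf (R : realType) (k : nat) (lam : R) (nu : nat) : R :=
  \sum_(n < nu.+1) poisk_pmf k lam n.

From HB Require Import structures.
From mathcomp Require Import all_boot all_order all_algebra.
From mathcomp Require Import reals sequences.
From mathcomp.analysis Require Import exp.
From mathcomp Require Import ring.
Import Order.TTheory GRing.Theory Num.Theory.
Local Open Scope ring_scope.

(* For n <= k, P(Y = n) is e^{-k lam} times the n-th coefficient c_n of the
   product P of the exponentials exp(lam X^d), d = 1..k, truncated after N > n
   terms. Modulo X^N this product satisfies X P' = (lam X + 2 lam X^2 + ... +
   k lam X^k) P, so comparing coefficients gives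
   n c_n = lam sum_{j<n} (n - j) c_j for n <= k. The numbers
   c_n = sum_j C(n-1, j) lam^(j+1)/(j+1)! obey the same recurrence (an iterated
   hockey-stick identity), and their partial sums telescope by Pascal's rule to
   sum_j C(nu, j) lam^j/j!. *)

Lemma hockey_stick m j : (\sum_(i < m.+1) 'C(i, j) = 'C(m.+1, j.+1))%N.
Proof.
elim: m => [|m IHm]; first by rewrite big_ord1; case: j.
by rewrite big_ord_recr IHm [in RHS]binS.
Qed.

Lemma sum_subn_mul_bin m j : (\sum_(i < m) (m - i) * 'C(i, j) = 'C(m.+1, j.+2))%N.
Proof.
elim: m => [|m IHm]; first by rewrite big_ord0 bin_small.
rewrite (eq_bigr (fun i : 'I_m.+1 => (m - i) * 'C(i, j) + 'C(i, j))%N); last first.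
  by move=> i _; rewrite subSn ?mulSn 1?addnC // -ltnS.
by rewrite big_split /= hockey_stick big_ord_recr /= subnn mul0n addn0 IHm.
Qed.

Lemma prod_scale_polyXn (R : comNzRingType) (I : finType) (a : I -> R) (e : I -> nat) :
  \prod_i (a i *: 'X^(e i)) = (\prod_i a i) *: ('X^(\sum_i e i) : {poly R}).
Proof.
under eq_bigr do rewrite -mul_polyC.
by rewrite big_split /= -prodrXr -mul_polyC rmorph_prod.
Qed.

Lemma dvdp_mulX_deriv_prod (R : idomainType) (I : Type) (s : seq I)
    (F G : I -> {poly R}) (D : {poly R}) :
  (forall i, D %| 'X * (F i)^`() - G i * F i) ->
  D %| 'X * (\prod_(i <- s) F i)^`() - (\sum_(i <- s) G i) * \prod_(i <- s) F i.
Proof.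
move=> dvdF; elim: s => [|a s IHs].
  by rewrite !big_nil -polyC1 derivC mulr0 mul0r subrr dvdp0.
set P := \prod_(i <- s) F i; set S := \sum_(i <- s) G i.
have -> : 'X * (\prod_(i <- a :: s) F i)^`() - (\sum_(i <- a :: s) G i) * \prod_(i <- a :: s) F i
    = ('X * (F a)^`() - G a * F a) * P + F a * ('X * P^`() - S * P).
  by rewrite !big_cons derivM -/P -/S; ring.
by apply: dvdp_add; [apply: dvdp_mulr | apply: dvdp_mull].
Qed.

Lemma coef_dvdXn (F : fieldType) (N j : nat) (p : {poly F}) :
  'X^N %| p -> (j < N)%N -> p`_j = 0.
Proof. by move=> /dvdpP[q ->] ltjN; rewrite coefMXn ltjN. Qed.

Section TruncatedExponentials.
Context {R : numFieldType}.
Implicit Types (lam : R) (d k n N : nat).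

Definition exp_coef lam (t : nat) : R := lam ^+ t / t`!%:R.

Lemma exp_coef0 lam : exp_coef lam 0 = 1.
Proof. by rewrite /exp_coef expr0 divr1. Qed.

Lemma exp_coefS lam t : t.+1%:R * exp_coef lam t.+1 = lam * exp_coef lam t.
Proof.
rewrite /exp_coef factS natrM exprS invfM mulrA mulrCA mulrA mulKf ?pnatr_eq0 //.
by rewrite mulrA.
Qed.

Definition exp_polyXn lam N d : {poly R} :=
  \sum_(t < N) exp_coef lam t *: 'X^(d * t).

Lemma dvdXn_mulX_deriv_exp_polyXn lam N d : (0 < d)%N ->
  'X^N %| 'X * (exp_polyXn lam N d)^`() - ((d%:R * lam) *: 'X^d) * exp_polyXn lam N d.
Proof.
move=> d_gt0.
pose g t : {poly R} := (exp_coef lam t * (d * t)%:R) *: 'X^(d * t).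
have derivE : 'X * (exp_polyXn lam N d)^`() = \sum_(t < N) g t.
  rewrite /exp_polyXn raddf_sum mulr_sumr; apply: eq_bigr => t _ /=.
  rewrite derivZ derivXn /g -scalerAr mulrnAr mulr1 -scalerMnl scalerMnr.
  by case: (d * t)%N => [|m]; rewrite ?mulr0n ?mulr0 // mulrnAr -exprS.
have shiftE : ((d%:R * lam) *: 'X^d) * exp_polyXn lam N d = \sum_(t < N) g t.+1.
  rewrite /exp_polyXn mulr_sumr; apply: eq_bigr => t _.
  rewrite /g -scalerAr -scalerAl scalerA -exprD -mulnS; congr (_ *: _).
  by rewrite mulrC -mulrA -exp_coefS natrM; ring.
have telescopeE : \sum_(t < N) g t.+1 = \sum_(t < N) g t + g N.
  have recl : \sum_(t < N.+1) g t = g 0 + \sum_(t < N) g t.+1 := big_ord_recl _ _.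
  have recr : \sum_(t < N.+1) g t = \sum_(t < N) g t + g N := big_ord_recr _ _.
  have g0 : g 0 = 0 by rewrite /g muln0 mulr0 scale0r.
  by rewrite -recr recl g0 add0r.
rewrite derivE shiftE telescopeE opprD addrA subrr add0r dvdpNr /g -mul_polyC.
by rewrite dvdp_mull // dvdp_exp2l // leq_pmull.
Qed.

Definition poisk_poly lam k N : {poly R} := \prod_(i < k) exp_polyXn lam N i.+1.

Lemma coef_poisk_poly lam k N n :
  (poisk_poly lam k N)`_n =
  \sum_(m : {ffun 'I_k -> 'I_N} | (\sum_(i < k) i.+1 * m i)%N == n)
     \prod_(i < k) exp_coef lam (m i).
Proof.
rewrite /poisk_poly /exp_polyXn bigA_distr_bigA /=.
under eq_bigr do rewrite prod_scale_polyXn.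
by rewrite coef_sumMXn.
Qed.

Lemma coef_weighted_sumXn lam k m : (m <= k)%N ->
  (\sum_(i < k) ((i.+1)%:R * lam) *: ('X^(i.+1) : {poly R}))`_m = m%:R * lam.
Proof.
rewrite coef_sumMXn; case: m => [|m] lemk; first by rewrite big1 ?mul0r.
by rewrite (big_pred1 (Ordinal lemk)).
Qed.

Lemma poisk_poly_rec lam k N n : (n <= k)%N -> (n < N)%N ->
  n%:R * (poisk_poly lam k N)`_n =
  lam * \sum_(j < n) (n - j)%:R * (poisk_poly lam k N)`_j.
Proof.
case: n => [|n] lenk ltnN; first by rewrite mul0r big_ord0 mulr0.
set P := poisk_poly lam k N.
set G := \sum_(i < k) ((i.+1)%:R * lam) *: ('X^(i.+1) : {poly R}).
have /coef_dvdXn/(_ ltnN)/eqP : 'X^N %| 'X * P^`() - G * P.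
  by apply: dvdp_mulX_deriv_prod => i; apply: dvdXn_mulX_deriv_exp_polyXn.
rewrite coefB subr_eq0 coefXM coef_deriv coefMr big_ord_recr /= subnn {}/G.
rewrite coef_weighted_sumXn // !mul0r addr0 mulr_natl => /eqP ->.
rewrite mulr_sumr; apply: eq_bigr => j _.
by rewrite coef_weighted_sumXn ?(leq_trans (leq_subr _ _)) // mulrCA mulrA.
Qed.

(* For n <= k this is e^{k lam} p_n, with the paper's summation index j shifted
   down by one. *)
Definition poisk_coef lam n : R :=
  if n is m.+1 then \sum_(j < n) 'C(m, j)%:R * exp_coef lam j.+1 else 1.

Lemma poisk_coef_widen lam m (i : 'I_m) :
  poisk_coef lam i.+1 = \sum_(j < m) 'C(i, j)%:R * exp_coef lam j.+1.
Proof.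
rewrite /= (big_ord_widen m (fun j => 'C(i, j)%:R * exp_coef lam j.+1)) //.
rewrite [RHS](bigID (fun j : 'I_m => (j < i.+1)%N)) /= [X in _ + X]big1 ?addr0 //.
by move=> j; rewrite -leqNgt => ltij; rewrite bin_small // mul0r.
Qed.

Lemma poisk_coef_rec lam n :
  n%:R * poisk_coef lam n = lam * \sum_(j < n) (n - j)%:R * poisk_coef lam j.
Proof.
case: n => [|m]; first by rewrite mul0r big_ord0 mulr0.
rewrite big_ord_recl subn0 mulr1.
under eq_bigr => i _ do rewrite lift0 subSS poisk_coef_widen mulr_sumr.
rewrite exchange_big /=.
have innerE (j : 'I_m) : \sum_(i < m) (m - i)%:R * ('C(i, j)%:R * exp_coef lam j.+1)
    = 'C(m.+1, j.+2)%:R * exp_coef lam j.+1.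
  rewrite -sum_subn_mul_bin natr_sum mulr_suml; apply: eq_bigr => i _.
  by rewrite natrM mulrA.
rewrite (eq_bigr _ (fun j _ => innerE j)) big_ord_recl bin0 mul1r !mulrDr.
congr (_ + _); first by rewrite /exp_coef expr1 divr1 mulrC.
rewrite !mulr_sumr; apply: eq_bigr => j _.
rewrite lift0 [RHS]mulrCA -exp_coefS mulrA -natrM mul_bin_diag natrM; ring.
Qed.

Lemma coef_poisk_polyE lam k N n : (n <= k)%N -> (n < N)%N ->
  (poisk_poly lam k N)`_n = poisk_coef lam n.
Proof.
elim/ltn_ind: n => -[|n] IHn lenk ltnN.
  rewrite /poisk_poly coef0_prod big1 // => i _.
  rewrite /exp_polyXn coef_sumMXn (big_pred1 (Ordinal ltnN)).
    by rewrite exp_coef0.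
  by move=> t /=; rewrite muln_eq0.
apply: (mulfI (_ : n.+1%:R != 0)); first by rewrite pnatr_eq0.
rewrite poisk_poly_rec // poisk_coef_rec; congr (_ * _); apply: eq_bigr => j _.
by rewrite IHn // ?(leq_trans _ lenk) ?(ltn_trans _ ltnN) // ltnW.
Qed.

Lemma sum_poisk_coef lam nu :
  \sum_(n < nu.+1) poisk_coef lam n = \sum_(j < nu.+1) 'C(nu, j)%:R * exp_coef lam j.
Proof.
elim: nu => [|nu IHnu]; first by rewrite !big_ord1 mul1r exp_coef0.
rewrite big_ord_recr IHnu /= [in RHS]big_ord_recl [in LHS]big_ord_recl !bin0 -addrA.
congr (_ + _); under [in RHS]eq_bigr do rewrite lift0 binS natrD mulrDl.
by rewrite big_split /= [in RHS]big_ord_recr /= bin_small // mul0r addr0.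
Qed.

End TruncatedExponentials.

Lemma poisk_pmfE (R : realType) k (lam : R) n : (n <= k)%N ->
  poisk_pmf k lam n = expR (- (k%:R * lam)) * poisk_coef lam n.
Proof.
by move=> lenk; rewrite -(coef_poisk_polyE lam k n.+1 n lenk (ltnSn n)) coef_poisk_poly.
Qed.

Lemma poisk_cdfE (R : realType) k (lam : R) nu : (nu <= k)%N ->
  poisk_cdf k lam nu =
  (expR (k%:R * lam))^-1 * \sum_(j < nu.+1) 'C(nu, j)%:R * exp_coef lam j.
Proof.
move=> lenuk; rewrite /poisk_cdf -sum_poisk_coef mulr_sumr -expRN.
by apply: eq_bigr => n _; rewrite poisk_pmfE // (leq_trans _ lenuk) // -ltnS.
Qed.

Theorem mainTheorem1 (R : realType) (k : nat) (lam : R) (nu : nat) :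
  (2 <= k)%N -> 0 < lam -> (nu <= k)%N ->
  (poisk_cdf k lam nu = 2^-1 <->
   expR (k%:R * lam) / 2 =
   \sum_(j < nu.+1) 'C(nu, j)%:R * (lam ^+ j / j`!%:R)).
Proof.
(* The equivalence holds for every k and lam; only nu <= k is needed. *)
move=> _ _ lenuk; rewrite poisk_cdfE //.
have expR_neq0 : expR (k%:R * lam) != 0 by rewrite gt_eqF ?expR_gt0.
by split=> <-; rewrite ?mulVKf ?mulKf.
Qed.
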